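(* For procedure $\mathcal{G}_{USL}(p,\mathrm{lb},\tilde D,\beta,\theta)$ with $\mathrm{lb}\le f^*$: (a) if it terminates in Step 1 or Step 3a, then $f(p^+)-\mathrm{lb}^+\le q[f(p)-\mathrm{lb}]$, where $q=1-(1-\theta)\min\{\beta,1-\beta\}$; (b) if it terminates in Step 3b, then $\tilde D<\mathcal{D}_{v,Y}$.
   Context: Problem: $f^*=\min_{x\in X}f(x)$ with $f(x)=\hat f(x)+F(x)$, $F(x):=\max_{y\in Y}\{\langle Ax,y\rangle-\hat g(y)\}$, where $X\subseteq\mathbb{R}^n$ and $Y\subseteq\mathbb{R}^m$ are nonempty convex compact sets, $\hat f:X\to\mathbb{R}$ is a simple Lipschitz convex function, $\hat g:Y\to\mathbb{R}$ continuous convex, $A$ linear. $\mathbb{R}^n$ carries a norm $\|\cdot\|$, $\mathbb{R}^m$ a norm $\|\cdot\|_Y$. $v$: differentiable prox-function of $Y$, strongly convex with modulus $\sigma_v$, prox-center $c_v=\operatorname{argmin}_Yv$; $V(y):=v(y)-v(c_v)-\langle\nabla v(c_v),y-c_v\rangle$; $\mathcal{D}_{v,Y}:=\max_{y,z\in Y}\{v(y)-v(z)-\langle\nabla v(z),y-z\rangle\}$. For $\eta>0$: $F_\eta(x):=\max_{y\in Y}\{\langle Ax,y\rangle-\hat g(y)-\eta V(y)\}$ (differentiable), $f_\eta:=\hat f+F_\eta$. $\omega$: differentiable prox-function of $X$ with modulus $\sigma_\omega$. Procedure $\mathcal{G}_{USL}(p,\mathrm{lb},\tilde D,\beta,\theta)$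 ($p\in X$, $\tilde D>0$, $\beta,\theta\in(0,1)$, given $\alpha_k\in(0,1]$): Step 0: $x^u_0=p$, $\overline f_0=f(p)$, $\underline f_0=\mathrm{lb}$, $l=\beta\underline f_0+(1-\beta)\overline f_0$, $\eta:=\theta(\overline f_0-l)/(2\tilde D)$; $x_0=p$, $X'_0=X$ (or another convex compact set containing $\{x\in X:f(x)\le l\}$); $d_\omega(x)=\omega(x)-\omega(x_0)-\langle\nabla\omega(x_0),x-x_0\rangle$; $k=1$. Step 1: $x^l_k=(1-\alpha_k)x^u_{k-1}+\alpha_kx_{k-1}$, $h_\eta(x^l_k,x):=\hat f(x)+F_\eta(x^l_k)+\langle\nabla F_\eta(x^l_k),x-x^l_k\rangle$, $\underline h_k=\min_{x\in X'_{k-1}}h_\eta(x^l_k,x)$ ($+\infty$ if empty), $\underline f_k=\max\{\underline f_{k-1},\min\{l,\underline h_k\}\}$; if $\underline f_k\ge l-\theta(l-\underline f_0)$ terminate with $p^+=x^u_{k-1}$, $\mathrm{lb}^+=\underline f_k$, $\tilde D^+=\tilde D$. Step 2: $x_k=\operatorname{argmin}_{x\in X'_{k-1}}\{d_\omega(x):h_\eta(x^l_k,x)\le l\}$. Step 3: $\overline f_k=\min\{\overline f_{k-1},f(\alpha_kx_k+(1-\alpha_k)x^u_{k-1})\}$, $x^u_k$ with $f(x^u_k)=\overline f_k$. 3a: if $\overline f_k\le l+\theta(\overline f_0-l)$ terminate with $p^+=x^u_k$, $\mathrm{lb}^+=\underline f_k$, $\tilde D^+=\tilde D$; 3b: otherwise,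 if $f_\eta(x^u_k)\le l+\frac\theta2(\overline f_0-l)$ terminate with $p^+=x^u_k$, $\mathrm{lb}^+=\underline f_k$, $\tilde D^+=2\tilde D$. Step 4: choose closed convex $X'_k$ with $\{x\in X'_{k-1}:h_\eta(x^l_k,x)\le l\}\subseteq X'_k\subseteq\{x\in X:\langle\nabla d_\omega(x_k),x-x_k\rangle\ge0\}$. Step 5: $k\leftarrow k+1$, go to Step 1. *)

From mathcomp Require Import all_boot all_order all_algebra.
From mathcomp Require Import all_classical all_reals all_analysis.
Set Implicit Arguments. Unset Strict Implicit. Unset Printing Implicit Defensive.
Import Order.TTheory GRing.Theory Num.Theory numFieldNormedType.Exports.
Local Open Scope ring_scope.
Local Open Scope classical_set_scope.

Definition dotv (R : ringType) (k : nat) (u w : 'rV[R]_k) : R := (u *m w^T) 0 0.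

Definition grad (R : realType) (k : nat) (f : 'rV[R]_k -> R) (x : 'rV[R]_k)
  : 'rV[R]_k := \row_(i < k) ('d f x (delta_mx 0 i : 'rV[R]_k)).

Definition is_norm (R : realType) (k : nat) (N : 'rV[R]_k -> R) : Prop :=
  [/\ forall x, 0 <= N x,
      forall x, N x = 0 -> x = 0,
      forall (a : R) x, N (a *: x) = `|a| * N x
    & forall x y, N (x + y) <= N x + N y].

Definition convex_setv (R : realType) (k : nat) (S : set 'rV[R]_k) : Prop :=
  forall x y (t : R), S x -> S y -> 0 <= t <= 1 -> S (t *: x + (1 - t) *: y).

Definition convex_on (R : realType) (k : nat) (S : set 'rV[R]_k)
  (g : 'rV[R]_k -> R) : Prop :=
  forall x y (t : R), S x -> S y -> 0 <= t <= 1 ->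
    g (t *: x + (1 - t) *: y) <= t * g x + (1 - t) * g y.

Definition strongly_convex_on (R : realType) (k : nat) (S : set 'rV[R]_k)
  (N : 'rV[R]_k -> R) (sigma : R) (g : 'rV[R]_k -> R) : Prop :=
  0 < sigma /\
  forall x y (t : R), S x -> S y -> 0 <= t <= 1 ->
    g (t *: x + (1 - t) *: y)
      <= t * g x + (1 - t) * g y - sigma / 2 * t * (1 - t) * (N (x - y)) ^+ 2.

Definition prox_function (R : realType) (k : nat) (S : set 'rV[R]_k)
  (N : 'rV[R]_k -> R) (sigma : R) (g : 'rV[R]_k -> R) : Prop :=
  (forall x, S x -> differentiable g x) /\ strongly_convex_on S N sigma g.

Definition lipschitz_on (R : realType) (k : nat) (S : set 'rV[R]_k)
  (N : 'rV[R]_k -> R) (g : 'rV[R]_k -> R) : Prop :=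
  exists L : R, forall x y, S x -> S y -> `|g x - g y| <= L * N (x - y).


(* F(x) = max_{y in Y} { <Ax, y> - ghat(y) }, Ax represented as x *m A *)
Definition Fmax (R : realType) (n m : nat) (Y : set 'rV[R]_m) (A : 'M[R]_(n, m))
  (ghat : 'rV[R]_m -> R) (x : 'rV[R]_n) : R :=
  sup [set dotv (x *m A) y - ghat y | y in Y].

Definition Vprox (R : realType) (m : nat) (v : 'rV[R]_m -> R) (cv : 'rV[R]_m)
  (y : 'rV[R]_m) : R :=
  v y - v cv - dotv (grad v cv) (y - cv).

Definition Feta (R : realType) (n m : nat) (Y : set 'rV[R]_m) (A : 'M[R]_(n, m))
  (ghat v : 'rV[R]_m -> R) (cv : 'rV[R]_m) (eta : R) (x : 'rV[R]_n) : R :=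
  sup [set dotv (x *m A) y - ghat y - eta * Vprox v cv y | y in Y].

(* D_{v,Y} = max_{y,z in Y} { v(y) - v(z) - <grad v(z), y - z> }, taken as an
   extended-real supremum (it is attained, hence finite, under the standing
   assumptions) *)
Definition DvY (R : realType) (m : nat) (Y : set 'rV[R]_m) (v : 'rV[R]_m -> R)
  : \bar R :=
  ereal_sup [set (v y - v z - dotv (grad v z) (y - z))%:E
            | y in Y & z in Y].

Record usl_problem (R : realType) (n m : nat) := UslProblem {
  pX : set 'rV[R]_n;
  pY : set 'rV[R]_m;
  pA : 'M[R]_(n, m);
  pfhat : 'rV[R]_n -> R;
  pghat : 'rV[R]_m -> R;
  pv : 'rV[R]_m -> R;
  pcv : 'rV[R]_m;
  pomega : 'rV[R]_n -> R
}.

Record usl_setting (R : realType) (n m : nat) (P : usl_problem R n m)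
  (nX : 'rV[R]_n -> R) (nY : 'rV[R]_m -> R) (sigma_v sigma_w : R) : Prop := {
  hX0 : pX P !=set0;  hXc : compact (pX P);  hXconv : convex_setv (pX P);
  hY0 : pY P !=set0;  hYc : compact (pY P);  hYconv : convex_setv (pY P);
  hnX : is_norm nX;   hnY : is_norm nY;
  hfconv : convex_on (pX P) (pfhat P);
  hflip : lipschitz_on (pX P) nX (pfhat P);
  hgconv : convex_on (pY P) (pghat P);
  hgcont : {within pY P, continuous (pghat P)};
  hv : prox_function (pY P) nY sigma_v (pv P);
  hcv : pY P (pcv P) /\ (forall y, pY P y -> pv P (pcv P) <= pv P y);
  homega : prox_function (pX P) nX sigma_w (pomega P)
}.

Definition fobj (R : realType) (n m : nat) (P : usl_problem R n m) (x : 'rV[R]_n) : R :=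
  pfhat P x + Fmax (pY P) (pA P) (pghat P) x.

Definition fstar (R : realType) (n m : nat) (P : usl_problem R n m) : R :=
  inf [set fobj P x | x in pX P].

Definition fetaobj (R : realType) (n m : nat) (P : usl_problem R n m) (eta : R)
  (x : 'rV[R]_n) : R :=
  pfhat P x + Feta (pY P) (pA P) (pghat P) (pv P) (pcv P) eta x.

Definition heta (R : realType) (n m : nat) (P : usl_problem R n m) (eta : R)
  (xl x : 'rV[R]_n) : R :=
  let Fe := Feta (pY P) (pA P) (pghat P) (pv P) (pcv P) eta in
  pfhat P x + Fe xl + dotv (grad Fe xl) (x - xl).

Definition domega (R : realType) (n m : nat) (P : usl_problem R n m)
  (x0 x : 'rV[R]_n) : R :=
  pomega P x - pomega P x0 - dotv (grad (pomega P) x0) (x - x0).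

Record usl_run (R : realType) (n : nat) := UslRun {
  rxu : nat -> 'rV[R]_n;
  rx : nat -> 'rV[R]_n;
  rxl : nat -> 'rV[R]_n;
  rfbar : nat -> R;
  rflow : nat -> R;
  rXp : nat -> set 'rV[R]_n
}.

Inductive usl_exit := ExitStep1 | ExitStep3a | ExitStep3b.

Section Run.
Context (R : realType) (n m : nat) (P : usl_problem R n m)
  (p : 'rV[R]_n) (lb Dt beta theta : R) (alpha : nat -> R) (r : usl_run R n).

Let f := fobj P.
Definition usl_l : R := beta * lb + (1 - beta) * f p.
Definition usl_eta : R := theta * (f p - usl_l) / (2 * Dt).
Let l := usl_l.
Let eta := usl_eta.
Let h := heta P eta.
Let dw := domega P p.
Let xu := rxu r.  Let x := rx r.  Let xl := rxl r.
Let fbar := rfbar r.  Let flow := rflow r.  Let Xp := rXp r.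

Definition usl_init : Prop :=
  [/\ xu 0 = p, x 0 = p, fbar 0 = f p, flow 0 = lb
    & [/\ convex_setv (Xp 0), compact (Xp 0), Xp 0 `<=` pX P
        & [set z | pX P z /\ f z <= l] `<=` Xp 0]].

(* the statements below describe iteration k.+1 (k : nat) *)
Definition usl_step1 (k : nat) : Prop :=
  xl k.+1 = (1 - alpha k.+1) *: xu k + alpha k.+1 *: x k /\
  (flow k.+1)%:E =
    maxe (flow k)%:E
      (mine l%:E (ereal_inf [set (h (xl k.+1) z)%:E | z in Xp k])).

Definition usl_test1 (k : nat) : Prop := l - theta * (l - lb) <= flow k.+1.

Definition usl_step2 (k : nat) : Prop :=
  [/\ Xp k (x k.+1), h (xl k.+1) (x k.+1) <= l
    & forall z, Xp k z -> h (xl k.+1) z <= l -> dw (x k.+1) <= dw z].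

Definition usl_step3 (k : nat) : Prop :=
  [/\ fbar k.+1 = Num.min (fbar k) (f (alpha k.+1 *: x k.+1 + (1 - alpha k.+1) *: xu k)),
      pX P (xu k.+1) & f (xu k.+1) = fbar k.+1].

Definition usl_test3a (k : nat) : Prop := fbar k.+1 <= l + theta * (fbar 0 - l).

Definition usl_test3b (k : nat) : Prop :=
  fetaobj P eta (xu k.+1) <= l + theta / 2 * (fbar 0 - l).

Definition usl_step4 (k : nat) : Prop :=
  [/\ closed (Xp k.+1), convex_setv (Xp k.+1),
      [set z | Xp k z /\ h (xl k.+1) z <= l] `<=` Xp k.+1
    & Xp k.+1 `<=` [set z | pX P z /\ 0 <= dotv (grad dw (x k.+1)) (z - x k.+1)]].

Definition usl_full_iter (k : nat) : Prop :=
  [/\ usl_step1 k, ~ usl_test1 k, usl_step2 k, usl_step3 k &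
      [/\ ~ usl_test3a k, ~ usl_test3b k & usl_step4 k]].

(* the run terminates during iteration K.+1, at the exit [e], with output
   (pplus, lbplus, Dplus) *)
Definition usl_terminates (K : nat) (e : usl_exit)
  (pplus : 'rV[R]_n) (lbplus Dplus : R) : Prop :=
  [/\ usl_init, (forall k, (k < K)%N -> usl_full_iter k), usl_step1 K &
  match e with
  | ExitStep1 =>
      [/\ usl_test1 K, pplus = xu K, lbplus = flow K.+1 & Dplus = Dt]
  | ExitStep3a =>
      [/\ ~ usl_test1 K, usl_step2 K, usl_step3 K, usl_test3a K &
          [/\ pplus = xu K.+1, lbplus = flow K.+1 & Dplus = Dt]]
  | ExitStep3b =>
      [/\ ~ usl_test1 K, usl_step2 K, usl_step3 K, ~ usl_test3a K &
          [/\ usl_test3b K, pplus = xu K.+1, lbplus = flow K.+1 & Dplus = 2 * Dt]]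
  end].
End Run.

From mathcomp Require Import all_boot all_order all_algebra.
From mathcomp Require Import all_classical all_reals all_analysis.
From mathcomp Require Import ring lra.
Set Implicit Arguments. Unset Strict Implicit. Unset Printing Implicit Defensive.
Import Order.TTheory GRing.Theory Num.Theory numFieldNormedType.Exports.
Local Open Scope ring_scope.
Local Open Scope classical_set_scope.

(* Write f0 = f(p) and l = beta lb + (1 - beta) f0, so that f0 - l = beta (f0 - lb)
   and l - lb = (1 - beta) (f0 - lb).  Lower bounds never drop below lb and upper
   bounds never exceed f0, hence passing the test of Step 1 (resp. 3a) bounds the new
   gap by 1 - (1 - theta) (1 - beta) (resp. 1 - (1 - theta) beta) times f0 - lb.
   For Step 3b: V <= D_{v,Y} on Y gives F <= F_eta + eta D_{v,Y}; if D_{v,Y} <= Dt,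
   then eta Dt = theta (f0 - l) / 2 turns the passed test of Step 3b into the test of
   Step 3a, which had failed. *)

Lemma dotv_continuous (R : realType) (k : nat) (u : 'rV[R]_k) :
  continuous (dotv u).
Proof.
have -> : dotv u = fun y => \sum_(i < k) u 0 i * y 0 i.
  by apply/funext => y; rewrite /dotv mxE; apply: eq_bigr => i _; rewrite mxE.
apply: continuous_big; first exact: add_continuous.
by move=> i _ y; apply: continuousM; [exact: cst_continuous|exact: coord_continuous].
Qed.

Lemma compact_has_ubound (R : realType) (A : set R) : compact A -> has_ubound A.
Proof.
move=> /compact_bounded [M [_ HM]].
have /HM AM : `|M| + 1 > M by rewrite (le_lt_trans (ler_norm _)) ?ltrDl.
by exists (`|M| + 1) => x /AM /= xM; exact: le_trans (ler_norm _) xM.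
Qed.

Lemma Feta_objective_continuous (R : realType) (m : nat) (Y : set 'rV[R]_m)
    (u cv : 'rV[R]_m) (ghat v : 'rV[R]_m -> R) (eta : R) :
  {within Y, continuous ghat} -> (forall y, Y y -> differentiable v y) ->
  {within Y, continuous (fun y => dotv u y - ghat y - eta * Vprox v cv y)}.
Proof.
move=> ghat_cont v_diff.
have -> : (fun y => dotv u y - ghat y - eta * Vprox v cv y) =
    (dotv u - (fun=> eta) \* ((v - (fun=> v cv)) - (dotv (grad v cv) \o (fun y => y - cv))))
    - ghat.
  by apply/funext => y; rewrite /Vprox !fctE /=; ring.
apply: within_continuousB => //; apply: continuous_in_subspaceT => y.
rewrite inE => Yy; apply: continuousB; first exact: dotv_continuous.
apply: continuousM; first exact: cst_continuous.
apply: continuousB.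
  apply: continuousB; last exact: cst_continuous.
  exact/differentiable_continuous/v_diff.
apply: continuous_comp; last exact: dotv_continuous.
by apply: continuousB; [exact: cvg_id|exact: cst_continuous].
Qed.

Lemma Fmax_le_Feta (R : realType) (n m : nat) (Y : set 'rV[R]_m) (A : 'M[R]_(n, m))
    (ghat v : 'rV[R]_m -> R) (cv : 'rV[R]_m) (eta D : R) (x : 'rV[R]_n) :
  Y !=set0 -> compact Y -> {within Y, continuous ghat} ->
  (forall y, Y y -> differentiable v y) ->
  0 <= eta -> (forall y, Y y -> Vprox v cv y <= D) ->
  Fmax Y A ghat x <= Feta Y A ghat v cv eta x + eta * D.
Proof.
move=> [y0 Yy0] Yc ghat_cont v_diff eta_ge0 V_le.
have Feta_ub : has_ubound [set dotv (x *m A) y - ghat y - eta * Vprox v cv y | y in Y].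
  exact/compact_has_ubound/continuous_compact/Yc/Feta_objective_continuous.
apply: ge_sup; first by exists (dotv (x *m A) y0 - ghat y0), y0.
move=> _ [y Yy <-].
have := ub_le_sup Feta_ub (ex_intro2 _ _ y Yy erefl).
have := ler_wpM2l eta_ge0 (V_le y Yy).
rewrite /Feta; lra.
Qed.

Lemma Vprox_le_DvY (R : realType) (m : nat) (Y : set 'rV[R]_m)
    (v : 'rV[R]_m -> R) (cv y : 'rV[R]_m) :
  Y cv -> Y y -> ((Vprox v cv y)%:E <= DvY Y v)%E.
Proof. by move=> Ycv Yy; apply: ereal_sup_ubound; exists y => //; exists cv. Qed.

Lemma fobj_le_fetaobj (R : realType) (n m : nat) (P : usl_problem R n m)
    (nX : 'rV[R]_n -> R) (nY : 'rV[R]_m -> R) (sigma_v sigma_w eta D : R)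
    (x : 'rV[R]_n) :
  usl_setting P nX nY sigma_v sigma_w -> 0 <= eta -> (DvY (pY P) (pv P) <= D%:E)%E ->
  fobj P x <= fetaobj P eta x + eta * D.
Proof.
move=> hs eta_ge0 DvY_le.
have V_le y : pY P y -> Vprox (pv P) (pcv P) y <= D.
  move=> Yy; rewrite -lee_fin; apply: le_trans DvY_le.
  exact: Vprox_le_DvY (hcv hs).1 Yy.
have := Fmax_le_Feta (pA P) x (hY0 hs) (hYc hs) (hgcont hs) (hv hs).1 eta_ge0 V_le.
rewrite /fobj /fetaobj; lra.
Qed.

Section ContractionFactor.
Variables (R : realFieldType) (lb f0 beta theta : R).
Let l := beta * lb + (1 - beta) * f0.
Let q := 1 - (1 - theta) * Num.min beta (1 - beta).

Lemma lb_le_of_not_test1 (fl : R) : beta < 1 -> theta < 1 ->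
  lb <= fl -> ~ (l - theta * (l - lb) <= fl) -> lb <= f0.
Proof.
move=> beta_lt1 theta_lt1 lb_fl not_test1; rewrite leNgt; apply/negP => f0_lt_lb.
apply: not_test1.
have : 0 <= (1 - theta) * (1 - beta) * (lb - f0) by rewrite !mulr_ge0 //; lra.
rewrite /l; lra.
Qed.

Lemma gap_le_of_test1 (fb fl : R) : 0 < beta -> beta < 1 -> theta < 1 ->
  fb <= f0 -> lb <= fl -> l - theta * (l - lb) <= fl -> fb - fl <= q * (f0 - lb).
Proof.
move=> beta_gt0 beta_lt1 theta_lt1 fb_le lb_fl test1.
rewrite /q; set M := Num.min beta (1 - beta).
have M_ge0 : 0 <= M by rewrite le_min; apply/andP; split; lra.
have M_le : M <= 1 - beta by rewrite ge_min lexx orbT.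
have [lb_le_f0|f0_lt_lb] := lerP lb f0.
  have : 0 <= (1 - theta) * ((1 - beta) - M) * (f0 - lb) by rewrite !mulr_ge0 //; lra.
  move: test1; rewrite /l; lra.
have : 0 <= (1 - theta) * M * (lb - f0) by rewrite !mulr_ge0 //; lra.
lra.
Qed.

Lemma gap_le_of_test3a (fb fl : R) : theta < 1 ->
  lb <= f0 -> lb <= fl -> fb <= l + theta * (f0 - l) -> fb - fl <= q * (f0 - lb).
Proof.
move=> theta_lt1 lb_le_f0 lb_fl test3a; rewrite /q; set M := Num.min beta (1 - beta).
have M_le : M <= beta by rewrite ge_min lexx.
have : 0 <= (1 - theta) * (beta - M) * (f0 - lb) by rewrite !mulr_ge0 //; lra.
move: test3a; rewrite /l; lra.
Qed.

End ContractionFactor.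

Section UslRun.
Variables (R : realType) (n m : nat) (P : usl_problem R n m) (p : 'rV[R]_n)
  (lb Dt beta theta : R) (alpha : nat -> R) (r : usl_run R n) (K : nat).
Hypothesis init : usl_init P p lb beta r.
Hypothesis full : forall k, (k < K)%N -> usl_full_iter P p lb Dt beta theta alpha r k.
Hypothesis step1K : usl_step1 P p lb Dt beta theta alpha r K.

Lemma usl_lb_le_flow k : (k <= K.+1)%N -> lb <= rflow r k.
Proof.
have [_ _ _ flow0 _] := init.
elim: k => [_|k IH kK]; first by rewrite flow0.
have [_ flowS] : usl_step1 P p lb Dt beta theta alpha r k.
  by move: kK; rewrite ltnS leq_eqVlt => /orP[/eqP -> //|/full[]].
apply: le_trans (IH (ltnW kK)) _.
by rewrite -lee_fin flowS le_max lexx.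
Qed.

Lemma usl_fbar_le_fobj k : (k <= K)%N -> rfbar r k <= fobj P p.
Proof.
have [_ _ fbar0 _ _] := init.
elim: k => [_|k IH kK]; first by rewrite fbar0.
have [_ _ _ [-> _ _] _] := full kK.
by rewrite ge_min IH // ltnW.
Qed.

Lemma usl_fobj_xu k : (k <= K)%N -> fobj P (rxu r k) = rfbar r k.
Proof.
have [xu0 _ fbar0 _ _] := init.
case: k => [_|k kK]; first by rewrite xu0 fbar0.
by have [_ _ _ [_ _ ->] _] := full kK.
Qed.

End UslRun.

Lemma usl_fobj_le_of_fetaobj_le (R : realType) (n m : nat) (P : usl_problem R n m)
    (nX : 'rV[R]_n -> R) (nY : 'rV[R]_m -> R) (sigma_v sigma_w : R)
    (p x : 'rV[R]_n) (lb Dt beta theta : R) :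
  usl_setting P nX nY sigma_v sigma_w -> 0 < Dt -> 0 <= beta -> 0 <= theta ->
  lb <= fobj P p -> (DvY (pY P) (pv P) <= Dt%:E)%E ->
  fetaobj P (usl_eta P p lb Dt beta theta) x
    <= usl_l P p lb beta + theta / 2 * (fobj P p - usl_l P p lb beta) ->
  fobj P x <= usl_l P p lb beta + theta * (fobj P p - usl_l P p lb beta).
Proof.
move=> hs Dt_gt0 beta_ge0 theta_ge0 lb_le_f0 DvY_le.
rewrite /usl_eta; set f0 := fobj P p; set l := usl_l P p lb beta; set eta := _ / _.
have f0_l : f0 - l = beta * (f0 - lb) by rewrite /l /usl_l -/f0; ring.
have eta_Dt : eta * Dt = theta * (f0 - l) / 2 by rewrite /eta; field; rewrite lt0r_neq0.
have eta_ge0 : 0 <= eta.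
  apply: divr_ge0; last by rewrite mulr_ge0 // ltW.
  by rewrite mulr_ge0 // f0_l mulr_ge0 // subr_ge0.
have := fobj_le_fetaobj x hs eta_ge0 DvY_le.
lra.
Qed.

Theorem lemma4p4 (R : realType) (n m : nat) (P : usl_problem R n m)
  (nX : 'rV[R]_n -> R) (nY : 'rV[R]_m -> R) (sigma_v sigma_w : R)
  (p : 'rV[R]_n) (lb Dt beta theta : R) (alpha : nat -> R)
  (r : usl_run R n) (K : nat) (e : usl_exit)
  (pplus : 'rV[R]_n) (lbplus Dplus : R) :
  usl_setting P nX nY sigma_v sigma_w ->
  pX P p -> 0 < Dt -> 0 < beta < 1 -> 0 < theta < 1 ->
  (forall k, 0 < alpha k.+1 <= 1) ->
  lb <= fstar P ->
  usl_terminates P p lb Dt beta theta alpha r K e pplus lbplus Dplus ->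
  ((e = ExitStep1 \/ e = ExitStep3a) ->
     fobj P pplus - lbplus
       <= (1 - (1 - theta) * Num.min beta (1 - beta)) * (fobj P p - lb)) /\
  (e = ExitStep3b -> (Dt%:E < DvY (pY P) (pv P))%E).
Proof.
move=> hs _ Dt_gt0 /andP[beta_gt0 beta_lt1] /andP[theta_gt0 theta_lt1] _ _.
move=> [init full step1K exit]; have [_ _ fbar0 _ _] := init.
have lb_le_flow := usl_lb_le_flow init full step1K (leqnn K.+1).
have lb_le_f0 : ~ usl_test1 P p lb beta theta r K -> lb <= fobj P p.
  exact: lb_le_of_not_test1 beta_lt1 theta_lt1 lb_le_flow.
case: e exit => [[test1 -> -> _]|[not_test1 _ [_ _ fxu] test3a [-> -> _]]|
  [not_test1 _ [_ _ fxu] not_test3a [test3b _ _ _]]]; split; try by case.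
- move=> _; rewrite (usl_fobj_xu init full) //.
  exact: gap_le_of_test1 (usl_fbar_le_fobj init full (leqnn K)) lb_le_flow test1.
- move=> _; rewrite fxu; move: test3a; rewrite /usl_test3a fbar0.
  exact: gap_le_of_test3a theta_lt1 (lb_le_f0 not_test1) lb_le_flow.
- move=> _; rewrite ltNge; apply/negP => DvY_le; apply: not_test3a.
  rewrite /usl_test3a fbar0 -fxu.
  apply: usl_fobj_le_of_fetaobj_le hs Dt_gt0 _ _ (lb_le_f0 not_test1) DvY_le _ => //;
    [exact: ltW | exact: ltW | by move: test3b; rewrite /usl_test3b fbar0].
Qed.
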